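(* Let $X$ be a Tychonoff space and $x \in X$. If player II has a winning strategy in the game $\mathsf{G}_1(\Omega_x, \Omega_x)$, then $X$ is productively countably tight at $x$.
   Context: For a point $x$ of a space $X$, $\Omega_x$ denotes the collection of all sets $A \subset X$ such that $x \notin A$ and $x \in \overline{A}$. The game $\mathsf{G}_1(\Omega_x,\Omega_x)$ is played in innings $n \in \omega$: in inning $n$ player I chooses $A_n \in \Omega_x$ and then player II chooses $a_n \in A_n$; player II wins if $\{a_n : n \in \omega\} \in \Omega_x$. A space $Y$ has countable tightness at $y \in Y$ if whenever $y \in \overline{A}$ there is a countable $B \subset A$ with $y \in \overline{B}$. $X$ is productively countably tight at $x$ if for every space $Y$ and every $y \in Y$ such that $Y$ has countable tightness at $y$, the product $X \times Y$ has countable tightness at $\langle x, y\rangle$. *)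

From HB Require Import structures.
From mathcomp Require Import all_boot all_order all_algebra.
From mathcomp Require Import all_classical all_reals all_analysis.
From mathcomp Require Import Rstruct Rstruct_topology.
Set Implicit Arguments. Unset Strict Implicit. Unset Printing Implicit Defensive.
Import Order.TTheory GRing.Theory Num.Theory.
Local Open Scope classical_set_scope.
Local Open Scope ring_scope.

Definition tychonoff_space (X : topologicalType) : Prop :=
  accessible_space X /\
  forall (x : X) (B : set X), closed B -> ~ B x ->
    exists f : X -> Rdefinitions.R,
      continuous f /\ f x = 0 /\ (forall b, B b -> f b = 1) /\
      (forall z, 0 <= f z <= 1).

Definition Omega {X : topologicalType} (x : X) : set (set X) :=
  [set A | ~ A x /\ closure A x].

Definition countably_tight_at {Y : topologicalType} (y : Y) : Prop :=
  forall A : set Y, closure A y ->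
    exists B : set Y, B `<=` A /\ countable B /\ closure B y.

Definition productively_countably_tight_at {X : topologicalType} (x : X) : Prop :=
  forall (Y : topologicalType) (y : Y), countably_tight_at y ->
    countably_tight_at ((x, y) : X * Y).

(* A strategy for player II in G_1(Omega_x, Omega_x): given the moves
   [:: A_0; ...; A_n] of player I so far, it chooses II's move in inning n. *)
Definition strategy_II (X : topologicalType) := seq (set X) -> X.

Definition legal_strategy_II {X : topologicalType} (x : X) (s : strategy_II X) :=
  forall (h : seq (set X)) (A : set X),
    (forall B, B \in h -> Omega x B) -> Omega x A -> A (s (rcons h A)).

Definition play_II {X : topologicalType} (s : strategy_II X) (A : nat -> set X) (n : nat) : X :=
  s (mkseq A n.+1).

Definition winning_strategy_II {X : topologicalType} (x : X) (s : strategy_II X) :=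
  legal_strategy_II x s /\
  forall A : nat -> set X, (forall n, Omega x (A n)) ->
    Omega x (range (play_II s A)).

Definition II_has_winning_strategy {X : topologicalType} (x : X) : Prop :=
  exists s : strategy_II X, winning_strategy_II x s.

From mathcomp Require Import all_boot all_classical all_reals all_analysis.
Local Open Scope classical_set_scope.

(* Let W be a subset of X * Y with (x, y) in its closure, and, for a
   neighbourhood V of y, let W_V be the set of points a <> x having some
   partner y' in V with (a, y') in W.
   If some W_V misses a neighbourhood of x, then y lies in the closure of the
   fibre of W over x, and countable tightness of Y at y finishes.
   Otherwise every W_V is a legal move of player I.  Then, for every legal
   history h, the answers of II's strategy to the moves W_V produce partners
   y' accumulating at y; tightness of Y selects countably many of them, with
   moves F_h(k) of I and partners G_h(k).  This gives a countably branching
   tree of partial plays whose nodes yield the countable set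
   {(s (h ++ [F_h(k)]), G_h(k))} inside W.  Given a neighbourhood U * V of
   (x, y), follow the branch that always picks a k with G_h(k) in V: it is a
   play against the strategy, which wins, so at some inning its move lies in U. *)

Definition legal_history {X : topologicalType} (x : X) (h : seq (set X)) :=
  forall B, B \in h -> Omega x B.

Lemma legal_history_rcons (X : topologicalType) (x : X) h A :
  legal_history x h -> Omega x A -> legal_history x (rcons h A).
Proof.
move=> hh hA B; rewrite mem_rcons in_cons => /orP [/eqP -> //|]; exact: hh.
Qed.

Lemma countable_range_enum {T : choiceType} {B : set T} {b0 : T} :
  B b0 -> countable B -> exists G : nat -> T, range G = B.
Proof.
move=> Bb0 /countable_injP [f finj].
exists (fun n => xget b0 [set b | B b /\ f b = n]).
apply/seteqP; split.
- move=> _ [n _ <-].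
  case: (pselect (exists b, B b /\ f b = n)) => [ex|nex].
  + by have [] := xgetPex b0 ex.
  + by rewrite xgetPN //; move=> b [Bb fb]; apply: nex; exists b.
- move=> b Bb; exists (f b) => //.
  have [Bb' fb'] := xgetI b0 (conj Bb erefl : [set c | B c /\ f c = f b] b).
  by apply: finj; rewrite ?inE.
Qed.

Definition punctured_shadow {X Y : Type} (W : set (X * Y)) (x : X) (V : set Y) :=
  [set a | a <> x /\ exists y', V y' /\ W (a, y')].

Section FibreCase.
Context {X Y : topologicalType} {x : X} {y : Y} {W : set (X * Y)}.

Lemma closure_fibre {U0 : set X} {V0 : set Y} : nbhs x U0 -> nbhs y V0 ->
  ~ (punctured_shadow W x V0 `&` U0 !=set0) ->
  closure W (x, y) -> closure [set y' | W (x, y')] y.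
Proof.
move=> nU0 nV0 noU0 clW V nV.
have nUV : nbhs (x, y) (U0 `*` (V `&` V0)).
  by exists (U0, V `&` V0) => //=; split=> //; apply: filterI.
have [[a y'] [Wp [/= Ua [Vy' V0y']]]] := clW _ nUV.
have [ax|anx] := pselect (a = x); first by subst a; exists y'.
by exfalso; apply: noU0; exists a; split => //; split => //; exists y'.
Qed.

Lemma countable_fibre_closure : countably_tight_at y ->
  closure [set y' | W (x, y')] y ->
  exists B : set (X * Y), B `<=` W /\ countable B /\ closure B (x, y).
Proof.
move=> tightY /tightY [B [BW [cB clB]]].
exists ((pair x) @` B); split; first by move=> _ [b Bb <-]; exact: BW.
split; first exact: sub_countable (card_image_le _ _) cB.
move=> N [[U V] [/= nU nV] UVN].
have [b [Bb Vb]] := clB V nV.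
exists (x, b); split; first by exists b.
by apply: UVN; split => //=; exact: nbhs_singleton.
Qed.

End FibreCase.

Lemma strategy_countable_responses {X Y : topologicalType} {x : X} {y : Y}
    {W : set (X * Y)} {s : strategy_II X} :
  legal_strategy_II x s -> countably_tight_at y ->
  (forall V, nbhs y V -> closure (punctured_shadow W x V) x) ->
  forall h, legal_history x h ->
  exists (F : nat -> set X) (G : nat -> Y),
    [/\ forall k, Omega x (F k), forall k, W (s (rcons h (F k)), G k)
      & closure (range G) y].
Proof.
move=> legal_s tightY shadow_cl h hh.
pose P := [set y' | exists A, Omega x A /\ W (s (rcons h A), y')].
have clP : closure P y.
  move=> V nV.
  have OV : Omega x (punctured_shadow W x V) by split; [case | exact: shadow_cl].
  have [_ [y' [Vy' Wy']]] := legal_s h _ hh OV.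
  by exists y'; split => //; exists (punctured_shadow W x V).
have [B [BP [cB clB]]] := tightY P clP.
have [b0 [Bb0 _]] := clB setT filterT.
have [G RG] := countable_range_enum Bb0 cB.
have /choice [F HF] : forall k, exists A, Omega x A /\ W (s (rcons h A), G k).
  by move=> k; apply: BP; rewrite -RG; exists k.
by exists F, G; split; [move=> k; case: (HF k) | move=> k; case: (HF k) | rewrite RG].
Qed.

Section StrategyTree.
Context {X Y : topologicalType} {x : X} {y : Y}.
Variable s : strategy_II X.
Variables (F : seq (set X) -> nat -> set X) (G : seq (set X) -> nat -> Y).
Hypothesis F_Omega : forall h, legal_history x h -> forall k, Omega x (F h k).
Hypothesis G_closure : forall h, legal_history x h -> closure (range (G h)) y.

(* A node q of the tree, a finite sequence of indices, encodes the partial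
   play in which I answered history h with F h (q_i). *)
Definition tree_history (q : seq nat) : seq (set X) :=
  foldl (fun h k => rcons h (F h k)) [::] q.

Definition tree_point (q : seq nat * nat) : X * Y :=
  let h := tree_history q.1 in (s (rcons h (F h q.2)), G h q.2).

Lemma tree_history_rcons q k :
  tree_history (rcons q k) = rcons (tree_history q) (F (tree_history q) k).
Proof. by rewrite /tree_history foldl_rcons. Qed.

Lemma legal_tree_history q : legal_history x (tree_history q).
Proof.
elim/last_ind: q => [|q k IH]; first by [].
by rewrite tree_history_rcons; apply: legal_history_rcons => //; exact: F_Omega.
Qed.

Definition tree_branch (K : seq (set X) -> nat) (n : nat) : seq nat :=
  iter n (fun q => rcons q (K (tree_history q))) [::].

Lemma mkseq_tree_branch K n :
  mkseq (fun i => F (tree_history (tree_branch K i))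
                    (K (tree_history (tree_branch K i)))) n
  = tree_history (tree_branch K n).
Proof. by elim: n => [//|n IH]; rewrite mkseqS IH /= tree_history_rcons. Qed.

Lemma closure_tree_points : winning_strategy_II x s ->
  closure (range tree_point) (x, y).
Proof.
move=> [_ win] N [[U V] [/= nU nV] UVN].
have /choice [K HK] : forall h, exists k, legal_history x h -> V (G h k).
  move=> h; have [hh|] := pselect (legal_history x h); last by exists 0%N.
  by have [_ [[k _ <-] Vk]] := G_closure _ hh V nV; exists k.
pose q n := (tree_branch K n, K (tree_history (tree_branch K n))).
have /win [_ clplay] : forall n, Omega x (F (tree_history (q n).1) (q n).2).
  by move=> n; exact: F_Omega _ (legal_tree_history _) _.
have [_ [[n _ <-] Un]] := clplay U nU.
exists (tree_point (q n)); split; first by exists (q n).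
apply: UVN; split => /=; last exact/HK/legal_tree_history.
by move: Un; rewrite /play_II mkseqS mkseq_tree_branch.
Qed.

End StrategyTree.

Lemma II_winning_productively_countably_tight (X : topologicalType) (x : X) :
  II_has_winning_strategy x -> productively_countably_tight_at x.
Proof.
move=> [s win] Y y tightY W clW.
have [shadow_cl|] :=
  pselect (forall V, nbhs y V -> closure (punctured_shadow W x V) x); last first.
  move=> /existsNP [V0 /not_implyP [nV0 /existsNP [U0 /not_implyP [nU0 noU0]]]].
  exact: countable_fibre_closure tightY (closure_fibre nU0 nV0 noU0 clW).
have /choice [FG HFG] : forall h, exists FG : (nat -> set X) * (nat -> Y),
    legal_history x h -> [/\ forall k, Omega x (FG.1 k),
      forall k, W (s (rcons h (FG.1 k)), FG.2 k) & closure (range FG.2) y].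
  move=> h; have [hh|] := pselect (legal_history x h); last first.
    by exists (fun=> set0, fun=> y).
  have [F [G resp]] := strategy_countable_responses win.1 tightY shadow_cl h hh.
  by exists (F, G).
pose F h := (FG h).1; pose G h := (FG h).2.
have F_Omega h : legal_history x h -> forall k, Omega x (F h k) by case/HFG.
have G_closure h : legal_history x h -> closure (range (G h)) y by case/HFG.
exists (range (tree_point s F G)); split; [|split].
- move=> _ [[q k] _ <-].
  by have [_ W_FG _] := HFG _ (legal_tree_history F F_Omega q); exact: W_FG.
- exact: sub_countable (card_image_le _ _) (countableP _).
- exact: closure_tree_points.
Qed.

Theorem corollary2p4 (X : topologicalType) (x : X) :
  tychonoff_space X -> II_has_winning_strategy x ->
  productively_countably_tight_at x.
Proof. by move=> _; exact: II_winning_productively_countably_tight. Qed.
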